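(* Let $G$ be a compact group and $\alpha$ an automorphism of $G$ such that $(G,\alpha)$ is topologically transitive and has finite depth. Then the homoclinic group $\mathrm{con}(\alpha)\cap\mathrm{con}(\alpha^{-1})$ is dense in $G$.
   Context: $\mathrm{con}(\beta)=\{x\in G:\beta^n(x)\to1 \text{ as } n\to\infty\}$. $(G,\alpha)$ is topologically transitive if some orbit $\{\alpha^n(x):n\in\mathbb{Z}\}$ is dense in $G$; it has finite depth if there is an open subgroup $V\le G$ with $\bigcap_{k\in\mathbb{Z}}\alpha^k(V)=\{1\}$. *)

From HB Require Import structures.
From mathcomp Require Import all_boot all_order all_algebra.
From mathcomp Require Import all_classical all_reals topology.
Set Implicit Arguments. Unset Strict Implicit. Unset Printing Implicit Defensive.
Import Order.TTheory GRing.Theory Num.Theory.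
Local Open Scope classical_set_scope.

Definition is_topological_group (G : topologicalType)
  (mul : G -> G -> G) (inv : G -> G) (e : G) : Prop :=
  [/\ (forall x y z, mul x (mul y z) = mul (mul x y) z),
      (forall x, mul e x = x /\ mul x e = x),
      (forall x, mul (inv x) x = e /\ mul x (inv x) = e),
      continuous (fun p : G * G => mul p.1 p.2) &
      continuous inv].

Definition is_top_group_automorphism (G : topologicalType)
  (mul : G -> G -> G) (alpha alpha_inv : G -> G) : Prop :=
  [/\ (forall x y, alpha (mul x y) = mul (alpha x) (alpha y)),
      cancel alpha alpha_inv, cancel alpha_inv alpha,
      continuous alpha & continuous alpha_inv].

Definition zpow (G : Type) (alpha alpha_inv : G -> G) (k : int) : G -> G :=
  match k with
  | Posz n => iter n alpha
  | Negz n => iter n.+1 alpha_inv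
  end.

Definition con (G : topologicalType) (e : G) (beta : G -> G) : set G :=
  [set x | (fun n : nat => iter n beta x) @ \oo --> e].

Definition top_transitive (G : topologicalType) (alpha alpha_inv : G -> G)
  : Prop :=
  exists x : G, closure [set zpow alpha alpha_inv k x | k in [set: int]] = setT.

Definition is_subgroup (G : Type) (mul : G -> G -> G) (inv : G -> G) (e : G)
  (V : set G) : Prop :=
  [/\ V e, (forall x y, V x -> V y -> V (mul x y)) & (forall x, V x -> V (inv x))].

Definition finite_depth (G : topologicalType) (mul : G -> G -> G) (inv : G -> G)
  (e : G) (alpha alpha_inv : G -> G) : Prop :=
  exists V : set G, [/\ open V, is_subgroup mul inv e V &
    \bigcap_(k in [set: int]) (zpow alpha alpha_inv k @` V) = [set e]].

From HB Require Import structures.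
From mathcomp Require Import all_boot all_order all_algebra.
From mathcomp Require Import all_classical all_reals topology.
From mathcomp Require Import zify.
Set Implicit Arguments. Unset Strict Implicit. Unset Printing Implicit Defensive.
Import Order.TTheory GRing.Theory Num.Theory.
Local Open Scope classical_set_scope.

(* Write V_K (in the code [Vcap K]) for the set of x with alpha^k x in V for
   all k in K.  These are closed subgroups, open when K is finite, and by finite
   depth and compactness the V_[-m,m] form a neighbourhood base of 1; hence
   V_]c,+oo[ is contracted by alpha and V_]-oo,c] by alpha^-1.
   Compactness yields a window length N such that every y in V_]j,j+N] factors
   as y = u t with u in V_]j,+oo[ and t in V_]-oo,j+N].  If z lies in two
   windows V_]q,q+N] and V_]i,i+N] with i < -m <= m <= q, factoring z at the
   first window and u^-1 at the second gives w in V_[-m,m] with z w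
   homoclinic.  When the orbit of x0 visits every open set at arbitrarily late
   times, such z = alpha^a x0 exist in every open set: choose b << a << c with
   alpha^b x0 and alpha^c x0 in the open window V_]0,N].  A dense orbit is
   recurrent forwards or backwards unless x0 is isolated, and an isolated
   point with dense orbit forces the group to be trivial. *)

Section CompactNested.
Variables (T : topologicalType) (cptT : compact [set: T]).

Lemma compact_nested_nonempty (C : nat -> set T) :
  (forall n, closed (C n)) -> (forall n, C n.+1 `<=` C n) ->
  (forall n, C n !=set0) -> \bigcap_n C n !=set0.
Proof.
move=> closedC C_decr C0.
have C_mono m n : (m <= n)%N -> C n `<=` C m.
  move=> /subnK <-; elim: (n - m)%N => [|k IH] //.
  by rewrite addSn; apply: subset_trans (C_decr _) IH.
pose F := filter_from setT C.
have FF : ProperFilter F.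
  apply: filter_from_proper => [|i _]; last exact: C0.
  apply: filter_fromT_filter; first by exists 0%N.
  by move=> i j; exists (maxn i j) => x Cx; split; apply: (C_mono _ (maxn i j));
    rewrite ?leq_maxl ?leq_maxr.
have [p [_ clp]] := cptT FF (ex_intro2 _ _ 0%N I (@subsetT _ _) : F setT).
exists p => n _; apply: closedC; rewrite clusterE in clp; apply: clp.
by exists n.
Qed.

Lemma compact_nested_subset (C : nat -> set T) (O : set T) :
  (forall n, closed (C n)) -> (forall n, C n.+1 `<=` C n) ->
  open O -> \bigcap_n C n `<=` O -> exists n, C n `<=` O.
Proof.
move=> closedC C_decr oO capO; apply: contrapT => noC.
have [p Cp] : \bigcap_n (C n `&` ~` O) !=set0.
  apply: compact_nested_nonempty => n.
  - by apply: closedI => //; exact: open_closedC.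
  - by move=> x [Cx nOx]; split => //; exact: C_decr.
  - apply: contrapT => C0; apply: noC; exists n => x Cx.
    by apply: contrapT => nOx; apply: C0; exists x.
by have [_] := Cp 0%N I; apply; apply: capO => n _; case: (Cp n I).
Qed.

End CompactNested.

Lemma continuous_closure_image (X Y : topologicalType) (f : X -> Y) (A : set X) :
  continuous f -> f @` closure A `<=` closure (f @` A).
Proof.
move=> fc _ [x clAx <-] B /fc /clAx [a [Aa Ba]].
by exists (f a); split => //; exists a.
Qed.

Lemma closure_open_point (X : topologicalType) (A : set X) y :
  open [set y] -> closure A y -> A y.
Proof. by move=> oy /(_ _ (open_nbhs_nbhs (conj oy erefl))) [z [Az <-]]. Qed.

Lemma not_closure_nbhs (X : topologicalType) (A : set X) y :
  ~ closure A y -> nbhs y (~` A).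
Proof. by rewrite -[A]setCK closure_setC setCK => /contrapT. Qed.

Lemma con_fixpoint (X : topologicalType) (f : X -> X) x : f x = x -> con x f x.
Proof.
move=> fx; rewrite /con /=.
have -> : (fun n => iter n f x) = fun=> x by apply/funext; elim=> //= n ->.
exact: cvg_cst.
Qed.

Lemma zpowN (X : Type) (f g : X -> X) k x : zpow g f k x = zpow f g (- k)%R x.
Proof. by case: k => [[|n]|n]. Qed.

Lemma zpow_oppn (X : Type) (f g : X -> X) (n : nat) x :
  zpow f g (- n%:Z)%R x = iter n g x.
Proof. by case: n. Qed.

Section IntegerIterates.
Variables (X : Type) (f g : X -> X).
Hypotheses (fK : cancel f g) (gK : cancel g f).
Local Notation zp := (zpow f g).
Local Open Scope ring_scope.

Definition zorbit x := [set zp k x | k in [set: int]].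

Lemma zpowSr k x : zp (k + 1) x = f (zp k x).
Proof.
case: k => [n|[|n]]; first by rewrite -[1]/(Posz 1) -PoszD addn1.
  by rewrite /= gK.
have -> : Negz n.+1 + 1 = Negz n by rewrite !NegzE -[n.+2]addn1 PoszD opprD subrK.
by rewrite /= gK.
Qed.

Lemma zpowBr k x : zp (k - 1) x = g (zp k x).
Proof. by rewrite -{2}(subrK 1 k) zpowSr fK. Qed.

Lemma zpowD k j x : zp (k + j) x = zp k (zp j x).
Proof.
elim/int_rect: k => [|n IH|n IH]; first by rewrite add0r.
  by rewrite -addn1 PoszD addrAC !zpowSr IH.
by rewrite -addn1 PoszD opprD addrAC !zpowBr IH.
Qed.

Lemma zpowK k : cancel (zp k) (zp (- k)).
Proof. by move=> x; rewrite -zpowD addNr. Qed.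

Lemma zpowKV k : cancel (zp (- k)) (zp k).
Proof. by move=> x; rewrite -zpowD subrr. Qed.

Lemma bigcap_zpow_image (A : set X) :
  \bigcap_(k in [set: int]) (zp k @` A) = \bigcap_(k in [set: int]) (zp k @^-1` A).
Proof.
apply/seteqP; split => x Ax k _.
  by have [a Aa <-] := Ax (- k) I; rewrite /= zpowKV.
by exists (zp (- k) x); [exact: Ax|rewrite zpowKV].
Qed.

End IntegerIterates.

Lemma bigcap_zpowN (X : Type) (f g : X -> X) (A : set X) :
  \bigcap_(k in [set: int]) (zpow g f k @^-1` A) =
  \bigcap_(k in [set: int]) (zpow f g k @^-1` A).
Proof.
apply/seteqP; split => x Ax k _; last by rewrite /= zpowN; exact: Ax.
by have := Ax (- k)%R I; rewrite /= zpowN opprK.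
Qed.

Lemma zorbitN (X : Type) (f g : X -> X) x : zorbit g f x = zorbit f g x.
Proof.
by apply/seteqP; split => _ [k _ <-]; exists (- k)%R => //; rewrite zpowN ?opprK.
Qed.

Section Recurrence.
Variables (T : topologicalType) (f g : T -> T).
Hypotheses (fK : cancel f g) (gK : cancel g f).
Hypotheses (f_cont : continuous f) (g_cont : continuous g).
Local Notation zp := (zpow f g).

Lemma continuous_zpow k : continuous (zp k).
Proof.
elim/int_rect: k => [|n IH|n IH] x; first exact: cvg_id.
  have -> : zp n.+1 = f \o zp n by apply/funext => y; rewrite -addn1 PoszD (zpowSr gK).
  by apply: continuous_comp; [exact: IH|exact: f_cont].
have -> : zp (- n.+1%:Z) = g \o zp (- n%:Z).
  by apply/funext => y; rewrite -addn1 PoszD opprD (zpowBr fK gK).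
by apply: continuous_comp; [exact: IH|exact: g_cont].
Qed.

Lemma recurrent_visits_often x :
  closure (zorbit f g x) = setT -> closure (range (fun n => iter n.+1 f x)) x ->
  forall O, open O -> O !=set0 -> forall M, exists2 n, (M <= n)%N & O (iter n f x).
Proof.
move=> dense rec.
pose tail M := closure (range (fun n => iter (M + n) f x)).
have tail_iter M : tail M.+1 (iter M f x).
  have := continuous_closure_image (@continuous_zpow M) (ex_intro2 _ _ x rec erefl).
  apply: closureS => _ [_ [n _ <-] <-]; exists n => //.
  by rewrite -[RHS]/(iter M f _) -iterD addnS.
have tail_decr M : tail M `<=` tail M.+1.
  rewrite {1}/tail closureE; apply: smallest_sub; first exact: closed_closure.
  move=> _ [[|n] _ <-]; first by rewrite addn0; exact: tail_iter.
  by apply: subset_closure; exists n => //; rewrite addSnnS.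
have tail_mono m M : tail m `<=` tail (M + m).
  by elim: M => [|M IH] //; apply: subset_trans IH (tail_decr _).
have tail0 : tail 0%N = setT.
  apply/seteqP; split => //; rewrite -dense closureE.
  apply: smallest_sub; first exact: closed_closure.
  move=> _ [[n|n] _ <-]; first by apply: subset_closure; exists n.
  have := continuous_closure_image (@continuous_zpow (Negz n))
    (ex_intro2 _ _ x (tail_mono 1%N n x rec) erefl).
  rewrite closureE; apply: smallest_sub; first exact: closed_closure.
  move=> _ [_ [k _ <-] <-]; apply: subset_closure; exists k => //.
  rewrite add0n addn1 -[iter (n.+1 + k) f x]/(zp (n.+1 + k)%N x) -(zpowD fK gK).
  by rewrite PoszD NegzE addrA addNr add0r.
move=> O oO [q Oq] M.
have : tail M q by rewrite -[M]addn0; apply: tail_mono; rewrite tail0.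
move=> /(_ O (open_nbhs_nbhs (conj oO Oq))) [_ [[n _ <-] On]].
by exists (M + n)%N; rewrite ?leq_addr.
Qed.

Lemma zorbit_isolated x : accessible_space T -> closure (zorbit f g x) = setT ->
  ~ closure (range (fun n => iter n.+1 f x)) x ->
  ~ closure (range (fun n => iter n.+1 g x)) x -> open [set x].
Proof.
set fwd := range _; set bwd := range _.
move=> accT dense /not_closure_nbhs nfwd /not_closure_nbhs nbwd.
have : nbhs x (~` fwd `&` ~` bwd) by apply: filterI.
rewrite nbhsE => -[O [oO Ox] Osub].
suff -> : [set x] = O by [].
apply/seteqP; split => [_ -> //|y Oy]; apply: contrapT => nyx.
have oOy : open (O `&` ~` [set x]).
  by apply: openI => //; rewrite openC; exact: accessible_closed_set1.
have : closure (zorbit f g x) y by rewrite dense.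
move=> /(_ _ (open_nbhs_nbhs (conj oOy (conj Oy nyx)))) [_ [[k _ <-] [Ok nk]]].
case: k Ok nk => [[|n]|n] Ok nk; first exact: nk.
- by case: (Osub _ Ok) => /(_ (ex_intro2 _ _ n I erefl)).
- by case: (Osub _ Ok) => _ /(_ (ex_intro2 _ _ n I erefl)).
Qed.

End Recurrence.

Lemma top_group_automorphismV (G : topologicalType) (mul : G -> G -> G)
  (alpha alpha_inv : G -> G) :
  is_top_group_automorphism mul alpha alpha_inv ->
  is_top_group_automorphism mul alpha_inv alpha.
Proof.
case=> alphaM alphaK alpha_invK ac aic; split => // x y.
by apply: (can_inj alphaK); rewrite alphaM !alpha_invK.
Qed.

Section TopologicalGroup.
Variables (G : topologicalType) (mul : G -> G -> G) (inv : G -> G) (e : G).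
Hypothesis G_topgroup : is_topological_group mul inv e.

(* The group laws live on the alias [grp]; topology stays on [G] itself, since
   copying it onto [grp] would give a structure only eta-equal to that of [G]. *)
Definition grp : Type := G.
HB.instance Definition _ := Choice.on grp.

Let grp_mulA : associative (mul : grp -> grp -> grp).
Proof. by case: G_topgroup. Qed.
Let grp_mul1g : left_id (e : grp) mul.
Proof. by case: G_topgroup => _ e_id * x; case: (e_id x). Qed.
Let grp_mulg1 : right_id (e : grp) mul.
Proof. by case: G_topgroup => _ e_id * x; case: (e_id x). Qed.
Let grp_mulVg : left_inverse (e : grp) inv mul.
Proof. by case: G_topgroup => _ _ invP * x; case: (invP x). Qed.
Let grp_mulgV : right_inverse (e : grp) inv mul.
Proof. by case: G_topgroup => _ _ invP * x; case: (invP x). Qed.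
HB.instance Definition _ :=
  isGroup.Build grp grp_mulA grp_mul1g grp_mulg1 grp_mulVg grp_mulgV.

Local Open Scope ring_scope.
Local Open Scope group_scope.
Local Ltac itv := rewrite /= ?in_itv /= ?andbT; lia.

Lemma mulg_continuous : continuous (fun p : grp * grp => p.1 * p.2).
Proof. by case: G_topgroup. Qed.

Lemma invg_continuous : continuous (fun x : grp => x^-1).
Proof. by case: G_topgroup. Qed.

Lemma mulgl_continuous (a : grp) : continuous (fun x : grp => a * x).
Proof.
move=> x; rewrite -[X in continuous_at _ X]/((fun p : grp * grp => p.1 * p.2) \o pair a).
apply: continuous_comp; last exact: mulg_continuous.
by apply: cvg_pair; [exact: cvg_cst|exact: cvg_id].
Qed.

Lemma mulgr_continuous (a : grp) : continuous (fun x : grp => x * a).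
Proof.
move=> x; rewrite -[X in continuous_at _ X]/((fun p : grp * grp => p.1 * p.2) \o pair^~ a).
apply: continuous_comp; last exact: mulg_continuous.
by apply: cvg_pair; [exact: cvg_id|exact: cvg_cst].
Qed.

Lemma nbhs_mulg_split (p : grp) (O : set grp) : nbhs p O ->
  exists P Q : set grp,
    [/\ open P, P p, nbhs (1 : grp) Q & forall z w, P z -> Q w -> O (z * w)].
Proof.
move=> Op; have : nbhs (p, 1 : grp) ((fun q : grp * grp => q.1 * q.2) @^-1` O).
  by apply: mulg_continuous; rewrite /= mulg1.
case=> -[P0 Q] [+ Q1] PQO; rewrite nbhsE => -[P [oP Pp] PP0].
by exists P, Q; split => // z w Pz Qw; apply: (PQO (z, w)); split => //; exact: PP0.
Qed.

Variables (alpha alpha_inv : grp -> grp).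
Hypothesis alpha_aut : is_top_group_automorphism mul alpha alpha_inv.
Local Notation zp := (zpow alpha alpha_inv).

Let alphaK : cancel alpha alpha_inv. Proof. by case: alpha_aut. Qed.
Let alpha_invK : cancel alpha_inv alpha. Proof. by case: alpha_aut. Qed.
Let zp_continuous k : continuous (zp k).
Proof.
by case: alpha_aut => _ _ _ ac aic; exact: (@continuous_zpow G _ _ alphaK alpha_invK ac aic k).
Qed.

Lemma zpowM k : {morph zp k : x y / x * y}.
Proof.
have [alphaM _ _ _ _] := alpha_aut.
have [alpha_invM _ _ _ _] := top_group_automorphismV alpha_aut.
elim/int_rect: k => [|n IH|n IH] x y //.
  by rewrite -addn1 PoszD !(zpowSr alpha_invK) IH alphaM.
by rewrite -addn1 PoszD opprD !(zpowBr alphaK alpha_invK) IH alpha_invM.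
Qed.

Lemma zpow1 k : zp k 1 = 1.
Proof. by apply: (@mulgI _ (zp k 1)); rewrite -zpowM !mulg1. Qed.

Lemma zpowV k x : zp k x^-1 = (zp k x)^-1.
Proof. by apply: (@mulgI _ (zp k x)); rewrite -zpowM !mulgV zpow1. Qed.

Variable V : set grp.
Hypotheses (V_open : open V) (V_subgroup : is_subgroup mul inv e V).

Lemma subgroup1 : V 1. Proof. by case: V_subgroup. Qed.
Lemma subgroupM x y : V x -> V y -> V (x * y).
Proof. by case: V_subgroup => _ + _; apply. Qed.
Lemma subgroupV x : V x -> V x^-1. Proof. by case: V_subgroup => _ _; apply. Qed.

Definition Vsaturated (A : set grp) := forall x y, A x -> V (x^-1 * y) -> A y.

Lemma nbhs_Vcoset (x : grp) : nbhs x [set y | V (x^-1 * y)].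
Proof.
apply: open_nbhs_nbhs; split; last by rewrite /= mulVg; exact: subgroup1.
by apply: open_comp V_open => y _; exact: mulgl_continuous.
Qed.

Lemma open_Vsaturated A : Vsaturated A -> open A.
Proof.
by move=> satA; rewrite openE => x Ax; apply: filterS (nbhs_Vcoset x) => y; exact: satA.
Qed.

Lemma closed_Vsaturated A : Vsaturated A -> closed A.
Proof.
move=> satA; rewrite -[A]setCK closedC; apply: open_Vsaturated => x y nAx Vxy Ay.
apply/nAx/(satA y) => //.
by rewrite -[x]invgK -invgM; exact: subgroupV.
Qed.

Lemma closed_open_subgroup : closed V.
Proof.
apply: closed_Vsaturated => x y Vx Vxy.
by rewrite -(mulVKg x y); exact: subgroupM.
Qed.

Definition Vcap (K : set int) : set grp := \bigcap_(k in K) (zp k @^-1` V).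

Lemma Vcap1 K : Vcap K 1.
Proof. by move=> k _; rewrite /= zpow1; exact: subgroup1. Qed.

Lemma VcapM K x y : Vcap K x -> Vcap K y -> Vcap K (x * y).
Proof.
by move=> Vx Vy k Kk; rewrite /= zpowM; apply: subgroupM; [exact: Vx|exact: Vy].
Qed.

Lemma VcapV K x : Vcap K x -> Vcap K x^-1.
Proof. by move=> Vx k Kk; rewrite /= zpowV; apply: subgroupV; exact: Vx. Qed.

Lemma subset_Vcap (K K' : set int) : K `<=` K' -> Vcap K' `<=` Vcap K.
Proof. by move=> KK' x Vx k /KK'; exact: Vx. Qed.

Lemma Vcap_zpow K j x : Vcap K (zp j x) <-> Vcap [set k | K (k - j)%R] x.
Proof.
split=> Vx k Kk /=; first by rewrite -[k](subrK j) (zpowD alphaK alpha_invK); exact: Vx.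
by rewrite -(zpowD alphaK alpha_invK); apply: Vx; rewrite /= addrK.
Qed.

Lemma closed_Vcap K : closed (Vcap K).
Proof.
apply: closed_bigI => k _; apply: preimage_closed; last exact: closed_open_subgroup.
by move=> x _; exact: zp_continuous.
Qed.

Hypotheses (G_compact : compact [set: G]) (V_depth : Vcap setT `<=` [set 1]).

Lemma Vcap_nbhs1 (O : set grp) : nbhs (1 : grp) O ->
  exists m : nat, Vcap `[- m%:Z, m%:Z]%classic `<=` O.
Proof.
rewrite nbhsE => -[O' [oO' O'1] O'O].
suff [m Om] : exists m : nat, Vcap `[- m%:Z, m%:Z]%classic `<=` O'.
  by exists m; apply: subset_trans Om O'O.
apply: (compact_nested_subset G_compact) => // [m|m|x Vx].
- exact: closed_Vcap.
- by apply: subset_Vcap => k; itv.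
- by rewrite (V_depth (t := x)) // => k _; apply: (Vx `|k|%N I); itv.
Qed.

Lemma Vcap_con (c : int) x : Vcap `]c, +oo[%classic x -> con (1 : grp) alpha x.
Proof.
move=> Vx O /Vcap_nbhs1 [m Om]; exists (`|c| + m).+1%N => // n /= cmn.
apply: Om; rewrite -[iter n alpha x]/(zp n x); apply/Vcap_zpow.
by apply: subset_Vcap Vx => k; itv.
Qed.

Lemma Vcap_con_inv (c : int) x :
  Vcap `]-oo, c]%classic x -> con (1 : grp) alpha_inv x.
Proof.
move=> Vx O /Vcap_nbhs1 [m Om]; exists (`|c| + m).+1%N => // n /= cmn.
apply: Om; rewrite -(zpow_oppn alpha); apply/Vcap_zpow.
by apply: subset_Vcap Vx => k; itv.
Qed.

Lemma open_Vcap_window (n : nat) : open (Vcap `]0, n%:Z]%classic).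
Proof.
elim: n => [|n IH].
  have -> : Vcap `]0, 0]%classic = setT by apply/seteqP; split => // x _ k; itv.
  exact: openT.
have -> : Vcap `]0, n.+1%:Z]%classic =
          Vcap `]0, n%:Z]%classic `&` (zp n.+1 @^-1` V).
  apply/seteqP; split => [x Vx|x [Vx Vn] k].
    by split; [apply: subset_Vcap Vx => k; itv|apply: Vx; itv].
  rewrite /= in_itv /= => /andP[k0 kn]; have [kn'|kn'] := leP k n%:Z.
    by apply: Vx; itv.
  by have -> : k = n.+1%:Z by lia.
by apply: openI IH (open_comp _ V_open) => x _; exact: zp_continuous.
Qed.

Lemma Vcap_extend : exists N : nat, forall (j : int) (n : nat), (N <= n)%N ->
  forall y, Vcap `]j, j + N%:Z]%classic y ->
  exists2 u, Vcap `]j, j + n%:Z]%classic u & V (zp j (u^-1 * y)).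
Proof.
(* The [E n] and their intersection are unions of cosets x V, hence clopen, so
   by compactness the decreasing [E n] end up inside their intersection. *)
pose E n := [set x : grp | exists2 u, Vcap `]0, n%:Z]%classic u & V (u^-1 * x)].
have E_sat n : Vsaturated (E n).
  move=> x y [u Vu Vux] Vxy; exists u => //.
  by rewrite -(mulVKg x y) mulgA; exact: subgroupM.
have E_decr n : E n.+1 `<=` E n.
  by move=> x [u Vu Vux]; exists u => //; apply: subset_Vcap Vu => k; itv.
have capE_sat : Vsaturated (\bigcap_n E n).
  by move=> x y Ex Vxy n _; exact: E_sat (Ex n I) Vxy.
have [N EN] := compact_nested_subset G_compact (fun n => closed_Vsaturated (E_sat n))
  E_decr (open_Vsaturated capE_sat) (@subset_refl _ _).
exists N => j n Nn y Vy.
have [|u Vu Vuy] := EN (zp j y) _ n I.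
  exists (zp j y); last by rewrite mulVg; exact: subgroup1.
  by apply/Vcap_zpow; apply: subset_Vcap Vy => k; itv.
exists (zp (- j) u); last by rewrite zpowM zpowV (zpowKV alphaK alpha_invK).
have /Vcap_zpow : Vcap `]0, n%:Z]%classic (zp j (zp (- j) u)).
  by rewrite (zpowKV alphaK alpha_invK).
by apply: subset_Vcap => k; itv.
Qed.

Section Decomposition.
Variable N : nat.
Hypothesis N_extend : forall (j : int) (n : nat), (N <= n)%N ->
  forall y, Vcap `]j, j + N%:Z]%classic y ->
  exists2 u, Vcap `]j, j + n%:Z]%classic u & V (zp j (u^-1 * y)).

Lemma Vcap_split_upto (j L : int) (m : nat) y : j + N%:Z <= L ->
  Vcap `]j, j + N%:Z]%classic y ->
  exists2 u, Vcap `]j, L]%classic u & Vcap `]j - m%:Z, j + N%:Z]%classic (u^-1 * y).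
Proof.
move=> jL Vy; elim: m => [|m [u Vu Vuy]].
  by exists 1; [exact: Vcap1|rewrite invg1 mul1g subr0].
have [||u' Vu' Vu'v] := @N_extend (j - m%:Z) (N + `|L - j| + m)%N _ (u^-1 * y).
- by lia.
- by apply: subset_Vcap Vuy => k; itv.
exists (u * u'); first by apply: VcapM Vu _; apply: subset_Vcap Vu' => k; itv.
rewrite invgM -mulgA => k; rewrite /= in_itv /= => /andP[jk kN].
have [km|km] := leP k (j - m%:Z); first by have -> : k = j - m%:Z by lia.
rewrite /= zpowM zpowV; apply: subgroupM; last by apply: Vuy; itv.
by apply: subgroupV; apply: Vu'; itv.
Qed.

Lemma Vcap_split (j : int) y : Vcap `]j, j + N%:Z]%classic y ->
  exists2 u, Vcap `]j, +oo[%classic u & Vcap `]-oo, j + N%:Z]%classic (u^-1 * y).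
Proof.
move=> Vy.
pose C (k : nat) := [set u | Vcap `]j, j + N%:Z + k%:Z]%classic u /\
                             Vcap `]j - k%:Z, j + N%:Z]%classic (u^-1 * y)].
have C_closed k : closed (C k).
  apply: closedI; first exact: closed_Vcap.
  apply: preimage_closed; last exact: closed_Vcap.
  move=> u _.
  rewrite -[X in continuous_at _ X]/((fun z : grp => z * y) \o (fun z : grp => z^-1)).
  by apply: continuous_comp; [exact: invg_continuous|exact: mulgr_continuous].
have C_decr k : C k.+1 `<=` C k.
  by move=> u [Vu Vuy]; split; [apply: subset_Vcap Vu|apply: subset_Vcap Vuy] => i; itv.
have C_ne k : C k !=set0.
  have [|u Vu Vuy] := @Vcap_split_upto j (j + N%:Z + k%:Z) k y _ Vy; first by lia.
  by exists u.
have [u Cu] := compact_nested_nonempty G_compact C_closed C_decr C_ne.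
exists u => k; rewrite /= in_itv /= => jk.
  by case: (Cu `|k - j|%N I) => + _; apply; itv.
by case: (Cu `|k - j|.+1%N I) => _; apply; itv.
Qed.

Lemma Vcap_homoclinic (m : nat) (q i : int) z : m%:Z <= q -> i < - m%:Z ->
  Vcap `]q, q + N%:Z]%classic z -> Vcap `]i, i + N%:Z]%classic z ->
  exists2 w, Vcap `[- m%:Z, m%:Z]%classic w &
    (con (1 : grp) alpha `&` con (1 : grp) alpha_inv) (z * w).
Proof.
move=> mq im Vq Vi.
have [u Vu Vt] := Vcap_split Vq; set t := u^-1 * z in Vt.
have Vui : Vcap `]i, i + N%:Z]%classic u^-1.
  rewrite -(mulgK z u^-1) -/t.
  by apply: VcapM; [apply: subset_Vcap Vt => k; itv|exact: VcapV].
have [u2 Vu2 Vu2u] := Vcap_split Vui.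
exists (t^-1 * u2).
  apply: VcapM; last by apply: subset_Vcap Vu2 => k; itv.
  by apply: VcapV; apply: subset_Vcap Vt => k; itv.
rewrite /t invgM invgK mulgA mulVKg; split.
  by apply: (@Vcap_con q); apply: VcapM Vu _; apply: subset_Vcap Vu2 => k; itv.
by apply: (@Vcap_con_inv (i + N%:Z)); rewrite -[u * u2]invgK invgM; exact: VcapV.
Qed.

End Decomposition.

Lemma homoclinic_dense_of_recurrent (x0 : grp) :
  (forall O : set grp, open O -> O !=set0 ->
     forall M, exists2 n, (M <= n)%N & O (iter n alpha x0)) ->
  closure (con (1 : grp) alpha `&` con (1 : grp) alpha_inv) = setT.
Proof.
move=> visits; have [N N_extend] := Vcap_extend.
apply/seteqP; split => // p _ O.
case/nbhs_mulg_split => [P [Q [oP Pp /Vcap_nbhs1 [m Om] PQO]]].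
pose W := Vcap `]0, N%:Z]%classic.
have oW := open_Vcap_window N; have W1 : W !=set0 by exists 1; exact: Vcap1.
have [b _ Wb] := visits W oW W1 0%N.
have [a ba Pa] := visits P oP (ex_intro _ p Pp) (b + m).+1.
have [c ac Wc] := visits W oW W1 (a + m)%N.
have window t : W (iter t alpha x0) ->
    Vcap `]t%:Z - a%:Z, t%:Z - a%:Z + N%:Z]%classic (iter a alpha x0).
  have -> : iter t alpha x0 = zp (t%:Z - a%:Z) (zp a x0).
    by rewrite -(zpowD alphaK alpha_invK) subrK.
  by move/Vcap_zpow; apply: subset_Vcap => k; itv.
have [||w Vw hw] := @Vcap_homoclinic N N_extend m (c%:Z - a%:Z) (b%:Z - a%:Z)
  (iter a alpha x0) _ _ (window c Wc) (window b Wb); [lia|lia|].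
by exists (iter a alpha x0 * w); split => //; apply: PQO => //; exact: Om.
Qed.

Lemma open_set1_mulg (x y : grp) : open [set x] -> open [set y].
Proof.
have -> : [set y] = (fun z : grp => x * y^-1 * z) @^-1` [set x].
  apply/seteqP; split => [z -> /=|z /= xz]; first by rewrite mulgVK.
  by apply: (@mulgI _ (x * y^-1)); rewrite xz mulgVK.
by move=> ox; apply: open_comp ox => z _; exact: mulgl_continuous.
Qed.

Lemma trivial_of_open_point (x : grp) : open [set x] ->
  closure (zorbit alpha alpha_inv x) = setT -> forall y : grp, y = 1.
Proof.
move=> ox dense.
have orbit_pt z : exists k, zp k x = z.
  have : closure (zorbit alpha alpha_inv x) z by rewrite dense.
  by case/(closure_open_point (open_set1_mulg z ox)) => k _ <-; exists k.
move=> y; have [k xk] := orbit_pt 1; have [j <-] := orbit_pt y.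
by rewrite -(zpowK alphaK alpha_invK k x) xk !zpow1.
Qed.

End TopologicalGroup.

Theorem corollary5p9 (G : topologicalType) (mul : G -> G -> G) (inv : G -> G)
  (e : G) (alpha alpha_inv : G -> G) :
  is_topological_group mul inv e ->
  hausdorff_space G ->
  compact [set: G] ->
  is_top_group_automorphism mul alpha alpha_inv ->
  top_transitive alpha alpha_inv ->
  finite_depth mul inv e alpha alpha_inv ->
  closure (con e alpha `&` con e alpha_inv) = setT.
Proof.
move=> tg T2 cpt aut [x0 dense] [V [oV sV depth]].
have aut' := top_group_automorphismV aut.
have [_ alphaK alpha_invK ac aic] := aut.
have V_depth : Vcap alpha alpha_inv V setT `<=` [set e].
  by rewrite /Vcap -bigcap_zpow_image // depth.
have V_depth' : Vcap alpha_inv alpha V setT `<=` [set e].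
  by rewrite /Vcap bigcap_zpowN -bigcap_zpow_image // depth.
have dense' : closure (zorbit alpha_inv alpha x0) = setT by rewrite zorbitN.
case: (pselect (closure (range (fun n => iter n.+1 alpha x0)) x0)) => [fwd|nfwd].
  apply: (@homoclinic_dense_of_recurrent _ _ _ _ tg _ _ aut _ oV sV cpt V_depth).
  exact: recurrent_visits_often alphaK alpha_invK ac aic x0 dense fwd.
case: (pselect (closure (range (fun n => iter n.+1 alpha_inv x0)) x0)) => [bwd|nbwd].
  rewrite setIC; apply: (@homoclinic_dense_of_recurrent _ _ _ _ tg _ _ aut' _ oV sV cpt V_depth').
  exact: recurrent_visits_often alpha_invK alphaK aic ac x0 dense' bwd.
have trivG := trivial_of_open_point tg aut
  (zorbit_isolated (hausdorff_accessible T2) dense nfwd nbwd) dense.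
apply/seteqP; split => // y _; rewrite (trivG y); apply: subset_closure.
by split; apply: con_fixpoint; exact: trivG.
Qed.
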